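(* Let $f$ be a loopless $(k,n)$-bounded affine permutation and let $f^\downarrow(p)=f(p-1)$ ($p\in\mathbb Z$), a $(k-1,n)$-bounded affine permutation. Then: (i) the reduced strand diagram of $f$ is connected (i.e. $G^\times_f$ is connected) if and only if both $G^H_f$ and $G^H_{f^\downarrow}$ are connected; (ii) the partition of $[n]$ into connected components of $G^\times_f$ is the common refinement of the partitions into connected components of $G^H_f$ and of $G^H_{f^\downarrow}$; i.e. $p,q\in[n]$ lie in the same component of $G^\times_f$ iff they lie in the same component of $G^H_f$ and in the same component of $G^H_{f^\downarrow}$.
   Context: A $(k,n)$-bounded affine permutation is a bijection $f:\mathbb Z\to\mathbb Z$ with $f(j+n)=f(j)+n$, $j\le f(j)\le j+n$, $\sum_{j=1}^n(f(j)-j)=kn$; loopless if $f(p)>p$ for all $p$; $\bar f\in S_n$ is given by $\bar f(p)\equiv f(p)\pmod n$. Place $b_1,\dots,b_n$ clockwise on a circle, with $p^-$ just before and $p^+$ just after $b_p$. For loopless $f$, the reduced strand diagram consists of straight arrows $S_p:s^+\to p^-$, $p\in[n]$, $s=\bar f^{-1}(p)$; distinct $p,q$ form an $f$-crossing if $S_p,S_q$ intersect; $G^\times_f$ is the graph on $[n]$ with edges the $f$-crossing pairs. For any bounded affine permutation $g$, $G^H_g$ is the graph on $[n]$ with an edge $\{p,q\}$ ($p\ne q$) whenever the closed straight segments $[b_s,b_p]$ and $[b_t,b_q]$ intersect, where $\bar g(s)=p$, $\bar g(t)=q$ (a segment may degenerate to a point). *)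

From Stdlib Require Import Relations.
From mathcomp Require Import all_boot all_order all_algebra.
Set Implicit Arguments. Unset Strict Implicit. Unset Printing Implicit Defensive.
Import Order.TTheory GRing.Theory Num.Theory.
Local Open Scope ring_scope.

Definition bounded_affine (k : int) (n : nat) (f : int -> int) : Prop :=
  [/\ bijective f,
      (forall j : int, f (j + n%:Z) = f j + n%:Z),
      (forall j : int, j <= f j <= j + n%:Z) &
      \sum_(1 <= j < n.+1) (f j%:Z - j%:Z) = k * n%:Z].

Definition loopless (f : int -> int) : Prop := forall p : int, p < f p.

Definition fdown (f : int -> int) : int -> int := fun p => f (p - 1).

(* Convention: the element p of [n] = {1,...,n} is represented by the
   ordinal i : 'I_n with p = i + 1.
   fbarv n f i is the ordinal value (in 0..n-1) of \bar f (i+1), i.e.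
   \bar f (i+1) = fbarv n f i + 1 where \bar f (p) = f(p) mod n in [n]. *)
Definition fbarv (n : nat) (f : int -> int) (i : 'I_n) : nat :=
  `|((f (i.+1)%:Z - 1) %% n%:Z)%Z|%N.

(* Rational parametrisation of the unit circle, traversed clockwise as the
   integer parameter t increases:
   t |-> ((1 - t^2)/(1 + t^2), -2t/(1 + t^2)). *)
Definition circ_pt (R : realFieldType) (t : int) : R * R :=
  let x : R := t%:~R in
  ((1 - x ^+ 2) / (1 + x ^+ 2), - (2 * x) / (1 + x ^+ 2)).

(* For p = i+1 in [n]: b_p at parameter 3p, p^- at 3p-1, p^+ at 3p+1.
   These 3n points are distinct and occur clockwise in the order
   1^-, b_1, 1^+, 2^-, b_2, 2^+, ..., n^-, b_n, n^+. *)
Definition bpt (R : realFieldType) (n : nat) (i : 'I_n) : R * R :=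
  circ_pt R (3 * (i.+1)%:Z).
Definition mpt (R : realFieldType) (n : nat) (i : 'I_n) : R * R :=
  circ_pt R (3 * (i.+1)%:Z - 1).
Definition ppt (R : realFieldType) (n : nat) (i : 'I_n) : R * R :=
  circ_pt R (3 * (i.+1)%:Z + 1).

Definition seg_meet (R : realFieldType) (a b c d : R * R) : Prop :=
  exists l m : R, [/\ 0 <= l <= 1, 0 <= m <= 1,
    a.1 + l * (b.1 - a.1) = c.1 + m * (d.1 - c.1) &
    a.2 + l * (b.2 - a.2) = c.2 + m * (d.2 - c.2)].

(* G^x_f : edge {p,q} iff the strands S_p : s^+ -> p^- and S_q : t^+ -> q^-
   intersect, where \bar f(s) = p, \bar f(t) = q. *)
Definition Gcross (R : realFieldType) (n : nat) (f : int -> int)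
    (p q : 'I_n) : Prop :=
  p != q /\ exists s t : 'I_n,
    [/\ fbarv f s = val p, fbarv f t = val q &
        seg_meet (ppt R s) (mpt R p) (ppt R t) (mpt R q)].

Definition GH (R : realFieldType) (n : nat) (g : int -> int)
    (p q : 'I_n) : Prop :=
  p != q /\ exists s t : 'I_n,
    [/\ fbarv g s = val p, fbarv g t = val q &
        seg_meet (bpt R s) (bpt R p) (bpt R t) (bpt R q)].

Definition same_comp (n : nat) (E : 'I_n -> 'I_n -> Prop) (p q : 'I_n) : Prop :=
  clos_refl_trans 'I_n E p q.

Definition gconnected (n : nat) (E : 'I_n -> 'I_n -> Prop) : Prop :=
  forall p q : 'I_n, same_comp E p q.

Arguments Gcross R n f p q : clear implicits.
Arguments GH R n g p q : clear implicits.

From Stdlib Require Import Relations Classical.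
From mathcomp Require Import all_boot all_order all_algebra.
From mathcomp Require Import ring lra zify.
Import Order.TTheory GRing.Theory Num.Theory.
Set Implicit Arguments. Unset Strict Implicit. Unset Printing Implicit Defensive.

(* All three graphs are crossing graphs of chords of one circle.  Put the
   marked points p^-, b_p, p^+ (p = i + 1) at positions 4i, 4i + 1, 4i + 2 of
   a circle with 4n positions and let s = \bar f^{-1}(p).  The strand S_p runs
   from 4s + 2 to 4p; the chord [b_s, b_p] of G^H_f runs from 4s + 1 to
   4p + 1, i.e. it is the strand with both ends pushed one step outwards; and
   the chord [b_{s+1}, b_p] of G^H_{f^\downarrow}, seen on the circle turned
   by two more steps, is the strand with both ends pulled one step inwards.

   1. Geometry: segments between points of the rationally parametrised circle
      meet iff their parameters share an endpoint or interlace; this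
      combinatorial [crossing] relation only depends on the cyclic order.
   2. Combinatorics (section [Separation]): crossing strands have crossing
      chords of both kinds.  Conversely, if [q] is not in the strand component
      of [p0], a maximal interval around the strand of [q] free of endpoints
      of that component has ends in different residue classes mod 4 (a
      counting argument), and its inside is cut off from [p0] in one of the
      two chord graphs.
   3. Encoding: the graphs of the theorem are these crossing graphs, read in
      the frame turned so that the strand of [p0] ends at position 0.
   The theorem follows by applying 2 in the frame of each vertex. *)

Section CircleGeometry.
Local Open Scope ring_scope.

Variable R : realFieldType.

Definition circle (x : R) : R * R :=
  ((1 - x ^+ 2) / (1 + x ^+ 2), - (2 * x) / (1 + x ^+ 2)).

Lemma circle_denom_gt0 (x : R) : 0 < 1 + x ^+ 2.
Proof. have := sqr_ge0 x; lra. Qed.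

Lemma circle_denom_neq0 (x : R) : 1 + x ^+ 2 != 0.
Proof. by rewrite gt_eqF // circle_denom_gt0. Qed.

(* An affine form vanishing exactly on the line through [circle a] and
   [circle b]; its sign at [circle c] tells on which side of that chord the
   point of parameter [c] lies. *)
Definition chord_form (a b : R) (X : R * R) : R :=
  (a * b - 1) * X.1 + (a + b) * X.2 + (a * b + 1).

Lemma chord_form_circle (a b c : R) :
  chord_form a b (circle c) = 2 * ((c - a) * (c - b) / (1 + c ^+ 2)).
Proof. by rewrite /chord_form /circle /=; field; rewrite circle_denom_neq0. Qed.

Lemma chord_form_affine (a b : R) (P Q : R * R) (m : R) :
  chord_form a b (P.1 + m * (Q.1 - P.1), P.2 + m * (Q.2 - P.2)) =
  (1 - m) * chord_form a b P + m * chord_form a b Q.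
Proof. by rewrite /chord_form /=; ring. Qed.

Lemma convex_zero_mul_le0 (u v m : R) :
  0 <= m <= 1 -> (1 - m) * u + m * v = 0 -> u * v <= 0.
Proof.
move=> /andP [m0 m1] e; rewrite leNgt; apply/negP=> uv.
have e' : (1 - m) * u ^+ 2 + m * (u * v) = 0.
  have -> : (1 - m) * u ^+ 2 + m * (u * v) = u * ((1 - m) * u + m * v) by ring.
  by rewrite e mulr0.
have u2 : 0 < u ^+ 2 by rewrite expr2; nra.
have h1 : 0 <= (1 - m) * u ^+ 2 by apply: mulr_ge0; lra.
have h2 : 0 <= m * (u * v) by apply: mulr_ge0; lra.
have [m1'|m1'] := eqVneq m 1; first by move: e'; rewrite m1' mul1r; lra.
have : 0 < (1 - m) * u ^+ 2 by apply: mulr_gt0 => //; rewrite subr_gt0 lt_neqAle m1'.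
lra.
Qed.

Lemma opposite_signs_neq (U V : R) : U * V < 0 -> U - V != 0.
Proof.
move=> h; apply/eqP=> e; have eU : U = V by lra.
by move: h; rewrite eU; nra.
Qed.

Lemma zero_crossing_in_unit (U V : R) : U * V < 0 -> 0 <= U / (U - V) <= 1.
Proof.
move=> h.
have hUV := opposite_signs_neq h.
have hq : 0 < (U - V) ^+ 2 by rewrite exprn_even_gt0.
have -> : U / (U - V) = U * (U - V) / (U - V) ^+ 2 by field.
apply/andP; split; first by apply: divr_ge0; [nra | lra].
rewrite ler_pdivrMr //; nra.
Qed.

Lemma seg_meet_circle_sign (a b c d : R) :
  seg_meet (circle a) (circle b) (circle c) (circle d) ->
  (a - c) * (a - d) * (b - c) * (b - d) <= 0.
Proof.
case=> l [m [l01 m01 e1 e2]].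
pose u := (c - a) * (c - b) / (1 + c ^+ 2).
pose v := (d - a) * (d - b) / (1 + d ^+ 2).
have on_ab : chord_form a b (circle a) = 0 /\ chord_form a b (circle b) = 0.
  by rewrite !chord_form_circle !subrr !(mulr0, mul0r).
have uv : u * v <= 0.
  have := chord_form_affine a b (circle a) (circle b) l.
  case: on_ab => -> ->; rewrite !mulr0 addr0 e1 e2 chord_form_affine.
  rewrite !chord_form_circle -/u -/v => e.
  have := convex_zero_mul_le0 m01 e.
  have -> : 2 * u * (2 * v) = 4 * (u * v) by ring.
  by rewrite pmulr_rle0.
have -> : (a - c) * (a - d) * (b - c) * (b - d) =
          u * v * ((1 + c ^+ 2) * (1 + d ^+ 2)).
  by rewrite /u /v; field; rewrite !circle_denom_neq0.
by apply: mulr_le0_ge0 => //; apply: mulr_ge0; apply: ltW; apply: circle_denom_gt0.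
Qed.

(* Conversely, chords with interlaced parameters meet: the meeting point is
   given explicitly by the zero crossings of the two chord forms. *)
Lemma seg_meet_circle_of_sign (a b c d : R) :
  (a - c) * (a - d) * (b - c) * (b - d) < 0 ->
  seg_meet (circle a) (circle b) (circle c) (circle d).
Proof.
move=> hP.
have pa := circle_denom_gt0 a; have pb := circle_denom_gt0 b.
have pc := circle_denom_gt0 c; have pd := circle_denom_gt0 d.
set U := (c - a) * (c - b) * (1 + d ^+ 2).
set V := (d - a) * (d - b) * (1 + c ^+ 2).
set U' := (a - c) * (a - d) * (1 + b ^+ 2).
set V' := (b - c) * (b - d) * (1 + a ^+ 2).
have hUV : U * V < 0.
  have -> : U * V = (a - c) * (a - d) * (b - c) * (b - d) *
                    ((1 + c ^+ 2) * (1 + d ^+ 2)) by rewrite /U /V; ring.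
  by rewrite pmulr_llt0 // mulr_gt0.
have hUV' : U' * V' < 0.
  have -> : U' * V' = (a - c) * (a - d) * (b - c) * (b - d) *
                      ((1 + a ^+ 2) * (1 + b ^+ 2)) by rewrite /U' /V'; ring.
  by rewrite pmulr_llt0 // mulr_gt0.
have nUV := opposite_signs_neq hUV; have nUV' := opposite_signs_neq hUV'.
exists (U' / (U' - V')), (U / (U - V)).
split; try exact: zero_crossing_in_unit.
all: rewrite /circle /= /U /V /U' /V'; field.
all: by rewrite !circle_denom_neq0 -/U -/V -/U' -/V' nUV nUV'.
Qed.

Lemma seg_meet_circleP (a b c d : R) :
  seg_meet (circle a) (circle b) (circle c) (circle d) <->
  [\/ a = c, a = d, b = c | b = d] \/ (a - c) * (a - d) * (b - c) * (b - d) < 0.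
Proof.
split=> [meet|].
- have := seg_meet_circle_sign meet; rewrite le_eqVlt => /orP [|]; last by right.
  rewrite !mulf_eq0 !subr_eq0 -!orbA => /or4P [] /eqP; left;
    auto using Or41, Or42, Or43, Or44.
- have i0 : 0 <= (0 : R) <= 1 by apply/andP; split; lra.
  have i1 : 0 <= (1 : R) <= 1 by apply/andP; split; lra.
  case=> [[->|->|->|->]|]; last exact: seg_meet_circle_of_sign.
  + by exists 0, 0; split => //; ring.
  + by exists 0, 1; split => //; ring.
  + by exists 1, 0; split => //; ring.
  + by exists 1, 1; split => //; ring.
Qed.

End CircleGeometry.

Section IntegerChords.
Local Open Scope ring_scope.

Definition between (a b c : int) : Prop := (a < c /\ c < b) \/ (b < c /\ c < a).

Definition crossing (a b c d : int) : Prop :=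
  (a = c \/ a = d \/ b = c \/ b = d) \/
  (between a b c /\ ~ between a b d) \/ (~ between a b c /\ between a b d).

Lemma crossing_sign (a b c d : int) :
  (a = c \/ a = d \/ b = c \/ b = d) \/ (a - c) * (a - d) * (b - c) * (b - d) < 0
  <-> crossing a b c d.
Proof.
have mul_lt0 (x y : int) : x * y < 0 <-> (0 < x /\ y < 0) \/ (x < 0 /\ 0 < y).
  by case: (ltrgtP x 0) => hx; [rewrite nmulr_rlt0 | rewrite pmulr_rlt0 | rewrite hx mul0r]; lia.
have mul_gt0 (x y : int) : 0 < x * y <-> (0 < x /\ 0 < y) \/ (x < 0 /\ y < 0).
  by case: (ltrgtP x 0) => hx; [rewrite nmulr_rgt0 | rewrite pmulr_rgt0 | rewrite hx mul0r]; lia.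
rewrite -mulrA mul_lt0 !mul_lt0 !mul_gt0 /crossing /between; lia.
Qed.

Lemma seg_meet_circ_ptP (R : realFieldType) (a b c d : int) :
  seg_meet (circ_pt R a) (circ_pt R b) (circ_pt R c) (circ_pt R d) <->
  crossing a b c d.
Proof.
rewrite -crossing_sign.
have eq_int (x y : int) : (x%:~R = y%:~R :> R) <-> x = y.
  by split=> [/eqP|->] //; rewrite eqr_int => /eqP.
have sign : ((a%:~R - c%:~R) * (a%:~R - d%:~R) * (b%:~R - c%:~R) *
              (b%:~R - d%:~R) < 0 :> R) = ((a - c) * (a - d) * (b - c) * (b - d) < 0).
  by rewrite -!intrB -!intrM ltrz0.
apply: iff_trans (seg_meet_circleP a%:~R b%:~R c%:~R d%:~R) _; rewrite sign.
split; (case=> [shared|]; [left|by right]).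
  by case: shared => [/eq_int|/eq_int|/eq_int|/eq_int]; auto.
by case: shared => [->|[->|[->|->]]];
  [apply: Or41 | apply: Or42 | apply: Or43 | apply: Or44].
Qed.

(* Cyclic orientation of three points of a circle whose positions are
   integers; unlike [between], it is invariant under rotations. *)
Definition cyclic (x y z : int) : Prop :=
  (x < y /\ y < z) \/ (y < z /\ z < x) \/ (z < x /\ x < y).

Lemma crossing_cyclic (a b c d : int) : crossing a b c d <->
  (a = c \/ a = d \/ b = c \/ b = d) \/
  (cyclic a c b /\ cyclic a b d) \/ (cyclic a b c /\ cyclic a d b).
Proof. rewrite /crossing /between /cyclic; lia. Qed.

Definition rotate (N k z : nat) : nat :=
  if (k <= z)%N then (z - k)%N else (z + N - k)%N.

Lemma rotate_eq (N k a b : nat) : (k <= N)%N -> (a < N)%N -> (b < N)%N ->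
  (rotate N k a = rotate N k b :> int) <-> (a = b :> int).
Proof. by move=> *; rewrite /rotate; case: (leqP k a) => ?; case: (leqP k b) => ?; lia. Qed.

Lemma rotate_inj (N k a b : nat) : (k <= N)%N -> (a < N)%N -> (b < N)%N ->
  rotate N k a = rotate N k b -> a = b.
Proof.
by move=> kN aN bN; rewrite /rotate; case: (leqP k a) => ?; case: (leqP k b) => ?; lia.
Qed.

Lemma rotate_lt (N k z : nat) : (k <= N)%N -> (z < N)%N -> (rotate N k z < N)%N.
Proof. by move=> *; rewrite /rotate; case: (leqP k z); lia. Qed.

Lemma rotate_mod (N k z : nat) : (k %% 4 = 0)%N -> (N %% 4 = 0)%N -> (k <= N)%N ->
  (z < N)%N -> (rotate N k z %% 4 = z %% 4)%N.
Proof. by move=> *; rewrite /rotate; case: (leqP k z); lia. Qed.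

Lemma rotate_onto (N k z : nat) : (k <= N)%N -> (z < N)%N ->
  exists z', (z' < N)%N /\ rotate N k z' = z.
Proof.
move=> kN zN; case: (ltnP (z + k) N) => zk.
- by exists (z + k)%N; rewrite /rotate; case: (leqP k (z + k)); lia.
- by exists (z + k - N)%N; rewrite /rotate; case: (leqP k (z + k - N)); lia.
Qed.

Lemma cyclic_rotate (N k a b c : nat) :
  (k <= N)%N -> (a < N)%N -> (b < N)%N -> (c < N)%N ->
  cyclic a b c <-> cyclic (rotate N k a) (rotate N k b) (rotate N k c).
Proof.
move=> *; rewrite /rotate /cyclic.
by case: (leqP k a) => ?; case: (leqP k b) => ?; case: (leqP k c) => ?; lia.
Qed.

Lemma crossing_rotate (N k a b c d : nat) : (k <= N)%N ->
  (a < N)%N -> (b < N)%N -> (c < N)%N -> (d < N)%N ->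
  crossing a b c d <->
  crossing (rotate N k a) (rotate N k b) (rotate N k c) (rotate N k d).
Proof.
move=> kN aN bN cN dN.
have := rotate_eq kN aN cN; have := rotate_eq kN aN dN.
have := rotate_eq kN bN cN; have := rotate_eq kN bN dN.
have := cyclic_rotate kN aN cN bN; have := cyclic_rotate kN aN bN dN.
have := cyclic_rotate kN aN bN cN; have := cyclic_rotate kN aN dN bN.
rewrite !crossing_cyclic; tauto.
Qed.

End IntegerChords.

Lemma clos_rt_mono (T : Type) (E E' : T -> T -> Prop) :
  (forall x y, E x y -> E' x y) ->
  forall x y, clos_refl_trans T E x y -> clos_refl_trans T E' x y.
Proof.
move=> sub x y; elim=> [a b /sub|a|a b c _ IH1 _ IH2].
- exact: rt_step.
- exact: rt_refl.
- exact: rt_trans IH1 IH2.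
Qed.

Lemma clos_rt_iff (T : Type) (E E' : T -> T -> Prop) :
  (forall x y, E x y <-> E' x y) ->
  forall x y, clos_refl_trans T E x y <-> clos_refl_trans T E' x y.
Proof. by move=> EE' x y; split; apply: clos_rt_mono => u v /EE'. Qed.

Lemma clos_rt_cut (T : Type) (E : T -> T -> Prop) (L : T -> Prop) (x y : T) :
  (forall u v, ~ L u -> L v -> ~ E u v) -> ~ L x -> L y ->
  ~ clos_refl_trans T E x y.
Proof.
move=> no_entry Lx Ly /clos_rt_rtn1_iff path; suff : ~ L y by [].
by elim: path => // u v Euv _ IH Lv; exact: no_entry IH Lv Euv.
Qed.

Lemma ex_max_below (P : nat -> Prop) (x z : nat) : P z -> z < x ->
  exists a, [/\ P a, a < x & forall e, P e -> e < x -> e <= a].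
Proof.
move=> Pz zx; move: {2}(x - z) (leqnn (x - z)) => k.
elim: k z Pz zx => [|k IH] z Pz zx kz; first lia.
case: (classic (exists e, P e /\ (z < e < x))) => [[e [Pe /andP [ze ex]]]|none].
  by apply: (IH e) => //; lia.
exists z; split => // e Pe ex; case: (leqP e z) => // ze.
by case: none; exists e; split => //; apply/andP.
Qed.

Lemma ex_min_above (P : nat -> Prop) (y z : nat) : P z -> y < z ->
  exists a, [/\ P a, y < a & forall e, P e -> y < e -> a <= e].
Proof.
move=> Pz yz; move: {2}(z - y) (leqnn (z - y)) => k.
elim: k z Pz yz => [|k IH] z Pz yz kz; first lia.
case: (classic (exists e, P e /\ (y < e < z))) => [[e [Pe /andP [ye ez]]]|none].
  by apply: (IH e) => //; lia.
exists z; split => // e Pe ye; case: (leqP z e) => // ez.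
by case: none; exists e; split => //; apply/andP.
Qed.

(* An open interval whose ends are congruent to [c] modulo 4 contains more
   points congruent to [c + 2] than points congruent to [c]: shifting by
   [-2] injects the latter into the former, missing [a' - 2]. *)
Lemma card_residues_lt (N a a' c : nat) :
  a %% 4 = c -> a' %% 4 = c -> a < a' -> a' <= N ->
  #|[set z : 'I_N | (a < z < a') && (z %% 4 == c)]| <
   #|[set z : 'I_N | (a < z < a') && (z %% 4 == (c + 2) %% 4)]|.
Proof.
move=> ac a'c aa' a'N.
case: N a'N => [|N] a'N; first lia.
pose shift (z : 'I_N.+1) : 'I_N.+1 := inord (z - 2).
have shiftK (z : 'I_N.+1) : 2 <= z -> shift z = z - 2 :> nat.
  by move=> z2; rewrite inordK //; have := ltn_ord z; lia.
have shift_inj :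
    {in [set z : 'I_N.+1 | (a < z < a') && (z %% 4 == c)] &, injective shift}.
  move=> z1 z2; rewrite !inE => /andP [/andP [h1 _] /eqP h1'].
  move=> /andP [/andP [h2 _] /eqP h2'] /(congr1 (@nat_of_ord _)).
  by rewrite !shiftK; [|lia|lia] => e; apply: val_inj => /=; lia.
rewrite -(card_in_imset shift_inj); apply: proper_card; apply/properP; split.
  apply/subsetP => x /imsetP [z]; rewrite !inE => /andP [/andP [h1 h2] /eqP h3] ->.
  rewrite shiftK; last lia.
  by apply/andP; split; [apply/andP; split|apply/eqP]; lia.
exists (inord (a' - 2)).
  rewrite inE inordK; last lia.
  by apply/andP; split; [apply/andP; split|apply/eqP]; lia.
apply/imsetP => -[z]; rewrite inE => /andP [/andP [h1 h2] /eqP h3].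
by move=> /(congr1 (@nat_of_ord _)); rewrite shiftK /= ?inordK; lia.
Qed.

Lemma card_residue_class (n N c : nat) (F : 'I_n -> nat) (P : pred nat) :
  (forall r, F r < N) -> (forall r, F r %% 4 = c) -> injective F ->
  (forall z, z < N -> z %% 4 = c -> exists r, F r = z) ->
  #|[set z : 'I_N | P z && (z %% 4 == c)]| = #|[set r | P (F r)]|.
Proof.
move=> F_lt F_mod F_inj F_onto.
pose F' r : 'I_N := Ordinal (F_lt r).
have -> : [set z : 'I_N | P z && (z %% 4 == c)] = F' @: [set r | P (F r)].
  apply/setP => z; rewrite inE; apply/idP/imsetP.
    case/andP=> Pz /eqP zc; have [r Fr] := F_onto _ (ltn_ord z) zc.
    by exists r; [rewrite inE Fr | apply: val_inj].
  by case=> r; rewrite inE => Pr ->; rewrite /= Pr F_mod eqxx.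
by apply: card_imset => r1 r2 /(congr1 (@nat_of_ord _)) /F_inj.
Qed.

(* The left chord of
   [r] has its ends pushed one step outwards, the right chord has them pulled
   one step inwards (cyclically). *)
Section Separation.
Variables (n : nat) (S T : 'I_n -> nat).
Local Notation N := (4 * n).
Hypotheses (S_lt : forall r, S r < N) (T_lt : forall r, T r < N)
  (S_mod : forall r, S r %% 4 = 2) (T_mod : forall r, T r %% 4 = 0)
  (S_inj : injective S) (T_inj : injective T)
  (S_onto : forall z, z < N -> z %% 4 = 2 -> exists r, S r = z)
  (T_onto : forall z, z < N -> z %% 4 = 0 -> exists r, T r = z).

Definition cyc_pred (z : nat) : nat := if z == 0 then N.-1 else z.-1.

Definition strand_edge (r r' : 'I_n) : Prop :=
  r != r' /\ crossing (S r) (T r) (S r') (T r').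
Definition left_edge (r r' : 'I_n) : Prop :=
  r != r' /\ crossing (S r).-1 (T r).+1 (S r').-1 (T r').+1.
Definition right_edge (r r' : 'I_n) : Prop :=
  r != r' /\ crossing (S r).+1 (cyc_pred (T r)) (S r').+1 (cyc_pred (T r')).

Lemma endpoints_distinct (r r' : 'I_n) : r != r' ->
  [/\ S r <> S r', T r <> T r', S r <> T r' & T r <> S r'].
Proof.
move=> /eqP neq; have := S_mod r; have := S_mod r'; have := T_mod r; have := T_mod r'.
by split=> [/S_inj|/T_inj|e|e] //; lia.
Qed.

(* Moving the ends by one step changes no crossing, since the other ends
   are at distance at least 2: crossing strands have crossing chords. *)
Lemma strand_chords (r r' : 'I_n) :
  strand_edge r r' -> left_edge r r' /\ right_edge r r'.
Proof.
case=> neq cross; have [? ? ? ?] := endpoints_distinct neq.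
have := S_lt r; have := S_lt r'; have := T_lt r; have := T_lt r'.
have := S_mod r; have := S_mod r'; have := T_mod r; have := T_mod r'.
move: cross; rewrite /left_edge /right_edge /crossing /between /cyc_pred neq.
by case: eqP => ?; case: eqP => ?; split; lia.
Qed.

Variable p0 : 'I_n.
Hypothesis T_p0 : T p0 = 0.

Local Notation comp := (clos_refl_trans _ strand_edge p0).

(* Positions occupied by strands of the component of [p0], together with the
   sentinel [N] closing the circle. *)
Definition frontier (e : nat) : Prop :=
  (exists a, comp a /\ (S a = e \/ T a = e)) \/ e = N.

Lemma comp_neq (r a : 'I_n) : ~ comp r -> comp a -> r != a.
Proof. by move=> nr ca; apply/eqP => e; apply: nr; rewrite e. Qed.

(* A strand outside the component of [p0] crosses no strand of it, so all
   endpoints of that component lie on one side of it. *)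
Lemma comp_outside (r a : 'I_n) : ~ comp r -> comp a ->
  ~ between (S r) (T r) (S a) /\ ~ between (S r) (T r) (T a).
Proof.
move=> nr /clos_rt_rtn1_iff path.
have no_cross (z : 'I_n) : comp z -> ~ crossing (S z) (T z) (S r) (T r).
  move=> cz cross; have edge : strand_edge z r.
    by split => //; rewrite eq_sym; exact: comp_neq nr cz.
  by apply: nr; exact: rt_trans cz (rt_step _ _ _ _ edge).
elim: path => [|y z yz py [outSy outTy]].
- have [? ? ? ?] := endpoints_distinct (comp_neq nr (rt_refl _ _ _)).
  have := no_cross _ (rt_refl _ _ _); rewrite /crossing /between T_p0; lia.
- have cy : comp y by apply/clos_rt_rtn1_iff; exact: py.
  have cz : comp z := rt_trans _ _ _ _ _ cy (rt_step _ _ _ _ yz).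
  have [? ? ? ?] := endpoints_distinct (comp_neq nr cz).
  have [? ? ? ?] := endpoints_distinct (comp_neq nr cy).
  have := no_cross z cz; case: yz => _; move: outSy outTy.
  rewrite /crossing /between; lia.
Qed.

Lemma frontier_outside (r : 'I_n) (e : nat) : ~ comp r -> frontier e ->
  [/\ ~ between (S r) (T r) e, e <> S r & e <> T r].
Proof.
move=> nr [[a [ca ea]]|->]; last first.
  by have := S_lt r; have := T_lt r; rewrite /between; split; lia.
have [outS outT] := comp_outside nr ca.
have [? ? ? ?] := endpoints_distinct (comp_neq nr ca).
by case: ea => <-; split => //; lia.
Qed.

Lemma frontier_mod (e : nat) : frontier e -> e %% 4 = 0 \/ e %% 4 = 2.
Proof.
case=> [[a [_ [<-|<-]]]|->]; [right; exact: S_mod|left; exact: T_mod|].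
by left; rewrite mulnC modnMl.
Qed.

Lemma frontier_le (e : nat) : frontier e -> e <= N.
Proof. by case=> [[a [_ [<-|<-]]]|->] //; apply: ltnW. Qed.

Section Gap.
Variables a a' : nat.
Hypotheses (fa : frontier a) (fa' : frontier a') (aa' : a < a')
  (gap_free : forall e, frontier e -> ~ (a < e < a')).

Local Notation in_gap z := (a < z < a').

Lemma gap_strand (r : 'I_n) : in_gap (S r) <-> in_gap (T r).
Proof.
have outside (z : nat) : in_gap z -> z = S r \/ z = T r -> ~ comp r.
  move=> gz ez cr; apply: (gap_free _ gz); left; exists r; split => //; case: ez; auto.
have := S_lt r; have := T_lt r; have := frontier_le fa'.
split=> gap; have nr := outside _ gap ltac:(auto);
  have [o1 o2 o3] := frontier_outside nr fa; have [o1' o2' o3'] := frontier_outside nr fa';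
  move: o1 o1' gap; rewrite /between; lia.
Qed.

(* The two ends of the gap lie in different residue classes modulo 4: the
   gap contains as many strand starts (class 2) as strand ends (class 0). *)
Lemma gap_ends_mod : a %% 4 <> a' %% 4.
Proof.
pose P := fun z : nat => in_gap z.
have balanced : #|[set z : 'I_N | P z && (z %% 4 == 2)]| =
                #|[set z : 'I_N | P z && (z %% 4 == 0)]|.
  rewrite (card_residue_class P S_lt S_mod S_inj S_onto).
  rewrite (card_residue_class P T_lt T_mod T_inj T_onto).
  by apply: eq_card => r; rewrite !inE; apply/idP/idP => /gap_strand.
move=> same; have a'N := frontier_le fa'.
by case: (frontier_mod fa) => ac; have := card_residues_lt ac (etrans (esym same) ac) aa' a'N;
  rewrite /= -/P ?balanced ltnn.
Qed.

(* If the gap runs from class 0 to class 2, pulling the ends of strands in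
   by one step keeps them strictly inside the gap or strictly outside its
   closure, so no right chord joins the inside to the outside. *)
Lemma gap_no_right_edge (u v : 'I_n) : a %% 4 = 0 -> a' %% 4 = 2 ->
  ~ in_gap (S u) -> in_gap (S v) -> ~ right_edge u v.
Proof.
move=> a0 a'2 nu gv [_]; have nu' : ~ in_gap (T u) by move/gap_strand.
have gv' := (gap_strand v).1 gv; have := frontier_le fa'.
have := S_mod u; have := S_mod v; have := T_mod u; have := T_mod v.
have := S_lt u; have := S_lt v; have := T_lt u; have := T_lt v.
move: nu nu' gv gv'; rewrite /crossing /between /cyc_pred.
by case: eqP => ?; case: eqP => ?; lia.
Qed.

(* Symmetrically, pushing ends outwards for a gap from class 2 to class 0. *)
Lemma gap_no_left_edge (u v : 'I_n) : a %% 4 = 2 -> a' %% 4 = 0 ->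
  ~ in_gap (S u) -> in_gap (S v) -> ~ left_edge u v.
Proof.
move=> a2 a'0 nu gv [_]; have nu' : ~ in_gap (T u) by move/gap_strand.
have gv' := (gap_strand v).1 gv; have := frontier_le fa'.
have := S_mod u; have := S_mod v; have := T_mod u; have := T_mod v.
have := S_lt u; have := S_lt v; have := T_lt u; have := T_lt v.
move: nu nu' gv gv'; rewrite /crossing /between; lia.
Qed.

End Gap.

(* Main separation argument: if [q] were outside the component of [p0], the
   largest frontier-free interval around the strand of [q] would be a gap
   whose inside is cut off from [p0] in one of the two chord graphs. *)
Lemma comp_of_chords (q : 'I_n) :
  clos_refl_trans _ left_edge p0 q -> clos_refl_trans _ right_edge p0 q -> comp q.
Proof.
move=> conn_left conn_right; apply: NNPP => nq.
have [Sq Tq _ _] := endpoints_distinct (comp_neq nq (rt_refl _ _ _)).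
have := S_mod q; have := S_lt q; have := T_lt q; rewrite T_p0 in Tq => ? ? ?.
have f0 : frontier 0 by left; exists p0; split; [exact: rt_refl | right].
have [a [fa a_lt a_max]] := @ex_max_below _ (minn (S q) (T q)) 0 f0 ltac:(lia).
have fN : frontier N by right.
have [a' [fa' a'_gt a'_min]] := @ex_min_above _ (maxn (S q) (T q)) N fN ltac:(lia).
have gap_free e : frontier e -> ~ (a < e < a').
  move=> fe /andP [ae ea']; have [o1 o2 o3] := frontier_outside nq fe.
  case: (ltnP e (minn (S q) (T q))) => [/(a_max _ fe)|?]; first lia.
  case: (ltnP (maxn (S q) (T q)) e) => [/(a'_min _ fe)|?]; first lia.
  by move: o1; rewrite /between; lia.
have aa' : a < a' by lia.
have in_q : a < S q < a' by apply/andP; lia.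
have out_p0 : ~ (a < S p0 < a') by move/(gap_strand fa fa' aa' gap_free); rewrite T_p0.
have := gap_ends_mod fa fa' aa' gap_free.
pose inside r := a < S r < a'.
case: (frontier_mod fa) (frontier_mod fa') => am [] a'm; rewrite am a'm // => _.
- apply: (clos_rt_cut (L := inside) _ out_p0 in_q conn_right) => u v.
  exact: gap_no_right_edge fa fa' aa' gap_free u v am a'm.
- apply: (clos_rt_cut (L := inside) _ out_p0 in_q conn_left) => u v.
  exact: gap_no_left_edge fa fa' aa' gap_free u v am a'm.
Qed.

End Separation.

Section ShiftDown.
Local Open Scope ring_scope.

Lemma fdown_bounded (n : nat) (k : int) (f : int -> int) :
  bounded_affine k n f -> loopless f -> bounded_affine (k - 1) n (fdown f).
Proof.
case=> [[g fg gf] per bnd sum] loopless_f; split.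
- by exists (fun j => g j + 1) => [x|y]; rewrite /fdown ?addrK ?fg ?subrK ?gf.
- by move=> j; rewrite /fdown addrAC per.
- by move=> j; rewrite /fdown; have := loopless_f (j - 1); have := bnd (j - 1); lia.
- pose F (i : nat) := f i%:Z - i%:Z.
  have per0 : F 0%N = F n by rewrite /F -(add0r n%:Z) per; ring.
  have shift : \sum_(1 <= j < n.+1) (fdown f j%:Z - j%:Z) =
               \sum_(0 <= i < n) F i - n%:Z.
    rewrite big_add1 (eq_bigr (fun i => F i - 1)) => [|i _].
      by rewrite sumrB sumr_const_nat subn0 natz.
    by rewrite /fdown /F -addn1 PoszD addrK; ring.
  rewrite shift mulrBl mul1r -sum; congr (_ - _).
  rewrite big_add1 [RHS](eq_bigr (fun i => F i.+1)) //.
  case: n per0 {shift sum bnd per} => [|m] per0.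
    by rewrite !big_geq.
  by rewrite big_nat_recl // big_nat_recr //= per0 addrC.
Qed.

End ShiftDown.

Section Encoding.
Local Open Scope ring_scope.
Variables (n : nat) (k : int) (f : int -> int).
Hypotheses (bounded_f : bounded_affine k n f) (loopless_f : loopless f).

Lemma fbarvE (s : 'I_n) : (fbarv f s)%:Z =
  if f (s.+1)%:Z <= n%:Z then f (s.+1)%:Z - 1 else f (s.+1)%:Z - 1 - n%:Z.
Proof.
case: bounded_f => _ _ bnd _; have := bnd (s.+1)%:Z; have := loopless_f (s.+1)%:Z.
have := ltn_ord s => ? ? ?; rewrite /fbarv gez0_abs; last by apply: modz_ge0; lia.
case: ifP => small; first by rewrite modz_small //; lia.
rewrite -[f _ - 1](subrK n%:Z) modzDr modz_small //; lia.
Qed.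

Lemma fbarv_lt (s : 'I_n) : (fbarv f s < n)%N.
Proof.
case: bounded_f => _ _ bnd _; have := bnd (s.+1)%:Z; have := loopless_f (s.+1)%:Z.
by have := ltn_ord s; move: (fbarvE s); case: ifP; lia.
Qed.

Definition fbar (s : 'I_n) : 'I_n := Ordinal (fbarv_lt s).

Lemma fbar_inj : injective fbar.
Proof.
case: bounded_f => [[g fg _] per bnd _] s t /(congr1 (fun x : 'I_n => (x : nat)%:Z)) /=.
rewrite !fbarvE => e; apply: val_inj => /=.
have := bnd (s.+1)%:Z; have := loopless_f (s.+1)%:Z; have := ltn_ord s.
have := bnd (t.+1)%:Z; have := loopless_f (t.+1)%:Z; have := ltn_ord t.
have same_class : f (s.+1)%:Z = f (t.+1)%:Z \/ f (s.+1)%:Z = f ((t.+1)%:Z + n%:Z) \/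
                  f (t.+1)%:Z = f ((s.+1)%:Z + n%:Z).
  by rewrite !per; move: e; case: ifP; case: ifP; lia.
by case: same_class => [|[|]] /(can_inj fg); lia.
Qed.

Definition fbar_inv : 'I_n -> 'I_n := invF fbar_inj.

Lemma fbarK : cancel fbar fbar_inv. Proof. exact: invF_f. Qed.
Lemma fbar_invK : cancel fbar_inv fbar. Proof. exact: f_invF. Qed.

Lemma fbarv_eq (s p : 'I_n) : fbarv f s = p <-> s = fbar_inv p.
Proof.
split=> [e|->]; last by have := congr1 val (fbar_invK p).
by rewrite -[s]fbarK; congr fbar_inv; apply: val_inj.
Qed.

Lemma fbarv_fdown (i : 'I_n) : fbarv (fdown f) i = fbarv f (ord_pred i).
Proof.
case: bounded_f => _ per _ _; have := ltn_ord i.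
rewrite /fbarv /fdown /=; have -> : (i.+1)%:Z - 1 = i%:Z by lia.
case: i => [[|i] /= lt_i_n].
- rewrite add0n modn_small ?prednK ?ltn_predL // -(add0r n%:Z) per.
  by rewrite addrAC modzDr.
- by move=> lt_i1_n; rewrite modnDr modn_small //; lia.
Qed.

Lemma fbarv_fdown_eq (s p : 'I_n) : fbarv (fdown f) s = p <-> s = ordS (fbar_inv p).
Proof.
rewrite fbarv_fdown fbarv_eq; split=> [<-|->]; [by rewrite ord_predK | exact: ordSK].
Qed.

End Encoding.

Section MarkedPoints.
Local Open Scope ring_scope.

(* The marked points [p^-, b_p, p^+] sit at parameters [3p - 1, 3p, 3p + 1]
   on the circle; relabelling them order-preservingly as [4i, 4i + 1,
   4i + 2] (with [p = i + 1]) does not change which chords cross. *)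
Lemma strand_positions (s p t q : nat) :
  crossing (3 * (s.+1)%:Z + 1) (3 * (p.+1)%:Z - 1) (3 * (t.+1)%:Z + 1) (3 * (q.+1)%:Z - 1)
  <-> crossing (4 * s + 2)%N (4 * p)%N (4 * t + 2)%N (4 * q)%N.
Proof. rewrite /crossing /between; lia. Qed.

Lemma point_positions (s p t q : nat) :
  crossing (3 * (s.+1)%:Z) (3 * (p.+1)%:Z) (3 * (t.+1)%:Z) (3 * (q.+1)%:Z)
  <-> crossing (4 * s + 1)%N (4 * p + 1)%N (4 * t + 1)%N (4 * q + 1)%N.
Proof. rewrite /crossing /between; lia. Qed.

Lemma edge_of_preimages (n : nat) (g : int -> int) (inv : 'I_n -> 'I_n)
    (P : 'I_n -> 'I_n -> 'I_n -> 'I_n -> Prop) (p q : 'I_n) :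
  (forall s p : 'I_n, fbarv g s = val p <-> s = inv p) ->
  (p != q /\ exists s t, [/\ fbarv g s = val p, fbarv g t = val q & P s p t q]) <->
  (p != q /\ P (inv p) p (inv q) q).
Proof.
move=> invP; split=> [[pq [s [t [/invP -> /invP -> Pst]]]]|[pq Pst]] //.
by split=> //; exists (inv p), (inv q); split => //; apply/invP.
Qed.

Variables (R : realFieldType) (n : nat) (k : int) (f : int -> int).
Hypotheses (bounded_f : bounded_affine k n f) (loopless_f : loopless f).
Local Notation inv := (fbar_inv bounded_f loopless_f).

Lemma Gcross_crossing (p q : 'I_n) : Gcross R n f p q <->
  p != q /\ crossing (4 * inv p + 2)%N (4 * p)%N (4 * inv q + 2)%N (4 * q)%N.
Proof.
pose meet (s p t q : 'I_n) := seg_meet (ppt R s) (mpt R p) (ppt R t) (mpt R q).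
rewrite /Gcross.
apply: iff_trans (edge_of_preimages meet p q (fbarv_eq bounded_f loopless_f)) _.
split=> -[pq cross]; split=> //; move: cross.
all: by rewrite /meet /ppt /mpt seg_meet_circ_ptP strand_positions.
Qed.

Lemma GH_crossing (p q : 'I_n) : GH R n f p q <->
  p != q /\ crossing (4 * inv p + 1)%N (4 * p + 1)%N (4 * inv q + 1)%N (4 * q + 1)%N.
Proof.
pose meet (s p t q : 'I_n) := seg_meet (bpt R s) (bpt R p) (bpt R t) (bpt R q).
rewrite /GH.
apply: iff_trans (edge_of_preimages meet p q (fbarv_eq bounded_f loopless_f)) _.
split=> -[pq cross]; split=> //; move: cross.
all: by rewrite /meet /bpt seg_meet_circ_ptP point_positions.
Qed.

Lemma GH_fdown_crossing (p q : 'I_n) : GH R n (fdown f) p q <->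
  p != q /\ crossing (4 * ordS (inv p) + 1)%N (4 * p + 1)%N
                     (4 * ordS (inv q) + 1)%N (4 * q + 1)%N.
Proof.
pose meet (s p t q : 'I_n) := seg_meet (bpt R s) (bpt R p) (bpt R t) (bpt R q).
rewrite /GH.
apply: iff_trans (edge_of_preimages meet p q (fbarv_fdown_eq bounded_f loopless_f)) _.
split=> -[pq cross]; split=> //; move: cross.
all: by rewrite /meet /bpt seg_meet_circ_ptP point_positions.
Qed.

End MarkedPoints.

Lemma ordS_val (n : nat) (s : 'I_n) : ordS s = (if s.+1 == n then 0 else s.+1) :> nat.
Proof.
have := ltn_ord s; rewrite /=; case: eqP => [->|ne] lt; first by rewrite modnn.
by rewrite modn_small //; lia.
Qed.

Section Frame.
Variables (R : realFieldType) (n : nat) (k : int) (f : int -> int).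
Hypotheses (bounded_f : bounded_affine k n f) (loopless_f : loopless f).
Variable p0 : 'I_n.
Local Notation N := (4 * n).
Local Notation inv := (fbar_inv bounded_f loopless_f).

(* Positions on the circle of [4n] points, rotated so that the end of the
   strand of [p0] is at position [0]: the strand of [r] starts at
   [start_pos r] (a point [s^+]) and ends at [end_pos r] (the point [r^-]). *)
Definition start_pos (r : 'I_n) : nat := rotate N (4 * p0) (4 * inv r + 2).
Definition end_pos (r : 'I_n) : nat := rotate N (4 * p0) (4 * r).

Lemma frame_ok : 4 * p0 <= N.
Proof. by have := ltn_ord p0; lia. Qed.

Lemma start_lt (r : 'I_n) : start_pos r < N.
Proof. by apply: rotate_lt frame_ok _; have := ltn_ord (inv r); lia. Qed.

Lemma end_lt (r : 'I_n) : end_pos r < N.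
Proof. by apply: rotate_lt frame_ok _; have := ltn_ord r; lia. Qed.

Lemma start_mod (r : 'I_n) : start_pos r %% 4 = 2.
Proof.
rewrite /start_pos rotate_mod ?frame_ok; try lia.
by have := ltn_ord (inv r); lia.
Qed.

Lemma end_mod (r : 'I_n) : end_pos r %% 4 = 0.
Proof.
rewrite /end_pos rotate_mod ?frame_ok; try lia.
by have := ltn_ord r; lia.
Qed.

Lemma start_inj : injective start_pos.
Proof.
move=> r r' /(rotate_inj frame_ok) e; apply: (can_inj (fbar_invK bounded_f loopless_f)).
apply: val_inj => /=; have := ltn_ord (inv r); have := ltn_ord (inv r').
by move: e; lia.
Qed.

Lemma end_inj : injective end_pos.
Proof.
move=> r r' /(rotate_inj frame_ok) e; apply: val_inj => /=.
by have := ltn_ord r; have := ltn_ord r'; move: e; lia.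
Qed.

Lemma start_onto (z : nat) : z < N -> z %% 4 = 2 -> exists r, start_pos r = z.
Proof.
move=> zN z2; have [z' [z'N ez]] := rotate_onto frame_ok zN.
have z'2 : z' %% 4 = 2.
  by rewrite -(@rotate_mod N (4 * p0) z' ltac:(lia) ltac:(lia) frame_ok z'N) ez.
have j_lt : z' %/ 4 < n by lia.
exists (fbar bounded_f loopless_f (Ordinal j_lt)).
by rewrite /start_pos fbarK -ez /=; congr rotate; lia.
Qed.

Lemma end_onto (z : nat) : z < N -> z %% 4 = 0 -> exists r, end_pos r = z.
Proof.
move=> zN z0; have [z' [z'N ez]] := rotate_onto frame_ok zN.
have z'0 : z' %% 4 = 0.
  by rewrite -(@rotate_mod N (4 * p0) z' ltac:(lia) ltac:(lia) frame_ok z'N) ez.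
have j_lt : z' %/ 4 < n by lia.
by exists (Ordinal j_lt); rewrite /end_pos -ez /=; congr rotate; lia.
Qed.

Lemma rotate_block (s d : nat) : s < n -> d < 4 ->
  rotate N (4 * p0) (4 * s + d) = rotate N (4 * p0) (4 * s) + d.
Proof.
have := ltn_ord p0; rewrite /rotate => *.
by case: (leqP (4 * p0) (4 * s + d)); case: (leqP (4 * p0) (4 * s)); lia.
Qed.

(* The chords of [f^\downarrow] are seen from a frame turned by two more
   steps: [b_{s+1}] comes right after [s^+] and [b_p] right before [p^-]. *)
Lemma rotate_succ_block (s : 'I_n) :
  rotate N (4 * p0 + 2) (4 * ordS s + 1) = (rotate N (4 * p0) (4 * s + 2)).+1.
Proof.
have := ltn_ord p0; have := ltn_ord s; rewrite ordS_val /rotate => *.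
case: eqP => ?; case: (leqP (4 * p0 + 2) _); case: (leqP (4 * p0) _); lia.
Qed.

Lemma rotate_pred_block (r : 'I_n) :
  rotate N (4 * p0 + 2) (4 * r + 1) = cyc_pred n (rotate N (4 * p0) (4 * r)).
Proof.
have := ltn_ord p0; have := ltn_ord r; rewrite /cyc_pred /rotate => *.
by case: (leqP (4 * p0 + 2) _); case: (leqP (4 * p0) _); case: eqP; lia.
Qed.

Lemma Gcross_frame (r r' : 'I_n) :
  Gcross R n f r r' <-> strand_edge start_pos end_pos r r'.
Proof.
have := ltn_ord (inv r); have := ltn_ord (inv r'); have := ltn_ord r; have := ltn_ord r'.
have := ltn_ord p0 => *.
by rewrite (Gcross_crossing R bounded_f loopless_f) (crossing_rotate (N := N) (k := 4 * p0));
  [exact: iff_refl | lia..].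
Qed.

Lemma GH_frame (r r' : 'I_n) :
  GH R n f r r' <-> left_edge start_pos end_pos r r'.
Proof.
have := ltn_ord (inv r); have := ltn_ord (inv r'); have := ltn_ord r; have := ltn_ord r'.
have := ltn_ord p0 => *.
rewrite (GH_crossing R bounded_f loopless_f) (crossing_rotate (N := N) (k := 4 * p0)); try lia.
rewrite /left_edge /start_pos /end_pos !rotate_block; try lia.
by rewrite !addn1 !addn2.
Qed.

Lemma GH_fdown_frame (r r' : 'I_n) :
  GH R n (fdown f) r r' <-> right_edge start_pos end_pos r r'.
Proof.
have := ltn_ord (ordS (inv r)); have := ltn_ord (ordS (inv r')).
have := ltn_ord r; have := ltn_ord r' => *.
rewrite (GH_fdown_crossing R bounded_f loopless_f).
rewrite (crossing_rotate (N := N) (k := 4 * p0 + 2)).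
  by rewrite !rotate_succ_block !rotate_pred_block.
all: have := ltn_ord p0; lia.
Qed.

Lemma end_p0 : end_pos p0 = 0.
Proof. by rewrite /end_pos /rotate leqnn subnn. Qed.

Lemma components_from_p0 (q : 'I_n) :
  same_comp (Gcross R n f) p0 q <->
  same_comp (GH R n f) p0 q /\ same_comp (GH R n (fdown f)) p0 q.
Proof.
rewrite /same_comp (clos_rt_iff Gcross_frame) (clos_rt_iff GH_frame).
rewrite (clos_rt_iff GH_fdown_frame).
have chords := strand_chords start_lt end_lt start_mod end_mod start_inj end_inj.
split=> [conn|[conn_left conn_right]].
- by split; apply: clos_rt_mono conn => u v /chords [].
- by apply: (comp_of_chords start_lt end_lt start_mod end_mod start_inj end_inj
    start_onto end_onto end_p0).
Qed.

End Frame.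

Local Open Scope ring_scope.

Theorem mainTheorem13 (R : realFieldType) (n : nat) (k : int) (f : int -> int) :
  bounded_affine k n f -> loopless f ->
  bounded_affine (k - 1) n (fdown f) /\
  (gconnected (Gcross R n f) <->
     gconnected (GH R n f) /\ gconnected (GH R n (fdown f))) /\
  (forall p q : 'I_n,
     same_comp (Gcross R n f) p q <->
     same_comp (GH R n f) p q /\ same_comp (GH R n (fdown f)) p q).
Proof.
move=> bounded_f loopless_f.
have components (p q : 'I_n) := components_from_p0 R bounded_f loopless_f p q.
split; first exact: fdown_bounded.
split=> //; split=> [conn | [conn_f conn_fdown] p q].
- by split=> p q; have [] := (components p q).1 (conn p q).
- by apply/components; split.
Qed.
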